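(* Let $\mathcal{H}$ be a hedgehog with support function $h$ and let $k>2$ be an integer. Then the $k$th Order Midpoint Set of $\mathcal{H}$ is parameterized by \[ \Omega_{\mathcal{H},k}(s)=\frac{2}{k}\sum_{j=1}^{k}h\Big(s+\frac{2\pi j}{k}\Big)\Big(\cos\Big(s+\frac{2\pi j}{k}\Big),\sin\Big(s+\frac{2\pi j}{k}\Big)\Big),\qquad s\in\Big[0,\frac{2\pi}{k}\Big]; \] that is, for every $s$, the center of mass of the equiangular $k$-gon circumscribed about $\mathcal{H}$ at parameter $s$ equals the right-hand side.
   Context: Write $u(s)=(\cos s,\sin s)$, $u'(s)=(-\sin s,\cos s)$. A hedgehog is a closed planar curve determined by a smooth $2\pi$-periodic function $h$ (its support function) via $\mathcal{H}(s)=h(s)u(s)+h'(s)u'(s)$. For $s\in\mathbb{R}$ and $j\in\mathbb{Z}$ let $\ell_j(s)=\{x:\langle x,u(s+\tfrac{2\pi j}{k})\rangle=h(s+\tfrac{2\pi j}{k})\}$ (support lines). The equiangular $k$-gon circumscribed about $\mathcal{H}$ at parameter $s$ has vertices $v_j(s)=\ell_j(s)\cap\ell_{j+1}(s)$, $j=0,\dots,k-1$ (indices mod $k$), and its center of mass is $\frac1k\sum_{j=0}^{k-1}v_j(s)$. The $k$th Order Midpoint Set $\Omega_{\mathcal{H},k}$ is the set of centers of mass of all these equiangular circumscribed $k$-gons. *)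

From Stdlib Require Import Reals Lra List.
From Coquelicot Require Import Coquelicot.
Open Scope R_scope.

Definition pt := (R * R)%type.

Definition dot (x y : pt) : R := fst x * fst y + snd x * snd y.

Definition u (s : R) : pt := (cos s, sin s).

Definition smooth (h : R -> R) : Prop :=
  forall (n : nat) (x : R), ex_derive (Derive_n h n) x.

Definition periodic_2pi (h : R -> R) : Prop :=
  forall x : R, h (x + 2 * PI) = h x.

(* angle of the j-th support line of the equiangular k-gon at parameter s *)
Definition theta (k : nat) (s : R) (j : nat) : R := s + 2 * PI * INR j / INR k.

Definition on_support_line (h : R -> R) (k : nat) (s : R) (j : nat) (x : pt) : Prop :=
  dot x (u (theta k s j)) = h (theta k s j).

Definition fsum (f : nat -> R) (lo n : nat) : R :=
  fold_right Rplus 0 (map f (seq lo n)).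

Definition center_of_mass (k : nat) (v : nat -> pt) : pt :=
  (fsum (fun j => fst (v j)) 0 k / INR k, fsum (fun j => snd (v j)) 0 k / INR k).

Definition midpoint_param (h : R -> R) (k : nat) (s : R) : pt :=
  (2 / INR k * fsum (fun j => h (theta k s j) * cos (theta k s j)) 1 k,
   2 / INR k * fsum (fun j => h (theta k s j) * sin (theta k s j)) 1 k).

(* Consecutive support lines have normals u(θ_j) and u(θ_j + a), a = 2π/k, so by
   Cramer's rule sin a · v_j = h(θ_j) J u(θ_{j+1}) - h(θ_{j+1}) J u(θ_j), with J the
   rotation by -π/2.  Summing over j and re-indexing the second sum cyclically (h and
   u are 2π-periodic) collects the coefficient h(θ_j) J (u(θ_j + a) - u(θ_j - a))
   = 2 sin a · h(θ_j) u(θ_j); for k > 2 we have 0 < a < π, so sin a can be cancelled. *)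

From Stdlib Require Import Reals Lra Lia.
From Coquelicot Require Import Coquelicot.
Open Scope R_scope.

Lemma fsum_cons (f : nat -> R) (lo n : nat) :
  fsum f lo (S n) = f lo + fsum f (S lo) n.
Proof. reflexivity. Qed.

Lemma fsum_rcons (f : nat -> R) (lo n : nat) :
  fsum f lo (S n) = fsum f lo n + f (lo + n)%nat.
Proof.
  revert lo; induction n as [|n IH]; intros lo.
  - unfold fsum; simpl; rewrite Nat.add_0_r; ring.
  - rewrite fsum_cons, IH, fsum_cons.
    replace (S lo + n)%nat with (lo + S n)%nat by lia; ring.
Qed.

Lemma fsum_ext (f g : nat -> R) (lo n : nat) :
  (forall j, (lo <= j < lo + n)%nat -> f j = g j) -> fsum f lo n = fsum g lo n.
Proof.
  revert lo; induction n as [|n IH]; intros lo Hfg; [reflexivity|].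
  rewrite !fsum_cons, (Hfg lo) by lia.
  rewrite IH; [reflexivity|]; intros; apply Hfg; lia.
Qed.

Lemma fsum_minus (f g : nat -> R) (lo n : nat) :
  fsum (fun j => f j - g j) lo n = fsum f lo n - fsum g lo n.
Proof.
  revert lo; induction n as [|n IH]; intros lo; [unfold fsum; simpl; ring|].
  rewrite !fsum_cons, IH; ring.
Qed.

Lemma fsum_scal (c : R) (f : nat -> R) (lo n : nat) :
  fsum (fun j => c * f j) lo n = c * fsum f lo n.
Proof.
  revert lo; induction n as [|n IH]; intros lo; [unfold fsum; simpl; ring|].
  rewrite !fsum_cons, IH; ring.
Qed.

Lemma fsum_shift (f : nat -> R) (lo n : nat) :
  fsum (fun j => f (S j)) lo n = fsum f (S lo) n.
Proof.
  revert lo; induction n as [|n IH]; intros lo; [reflexivity|].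
  rewrite !fsum_cons, IH; reflexivity.
Qed.

Lemma fsum_rotate (f : nat -> R) (n : nat) : f O = f n -> fsum f 0 n = fsum f 1 n.
Proof.
  intros Hf; destruct n as [|n]; [reflexivity|].
  rewrite fsum_cons, fsum_rcons, Hf; simpl; ring.
Qed.

Lemma support_lines_vertex (t a p q : R) (x : pt) :
  dot x (u t) = p -> dot x (u (t + a)) = q ->
  sin a * fst x = p * sin (t + a) - q * sin t /\
  sin a * snd x = q * cos t - p * cos (t + a).
Proof.
  destruct x as [x1 x2]; unfold dot, u; simpl; intros <- <-.
  assert (Ha : sin a = sin ((t + a) - t)) by (f_equal; ring).
  rewrite Ha, sin_minus; split; ring.
Qed.

Lemma sin_periodic : periodic_2pi sin.
Proof. intros x; rewrite sin_plus, sin_2PI, cos_2PI; ring. Qed.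

Lemma opp_cos_periodic : periodic_2pi (fun x => - cos x).
Proof. intros x; rewrite cos_plus, sin_2PI, cos_2PI; ring. Qed.

Section EquiangularPolygon.

Variables (h : R -> R) (k : nat) (s : R).
Hypothesis h_periodic : periodic_2pi h.
Hypothesis k_gt2 : (2 < k)%nat.

Let a := 2 * PI / INR k.
Let th := theta k s.

Lemma INR_k_neq0 : INR k <> 0.
Proof. apply not_0_INR; lia. Qed.

Lemma theta_S (j : nat) : th (S j) = th j + a.
Proof. unfold th, theta, a; rewrite S_INR; unfold Rdiv; ring. Qed.

Lemma theta_last : th k = th O + 2 * PI.
Proof. pose proof INR_k_neq0; unfold th, theta; simpl; field; assumption. Qed.

Lemma sin_step_neq0 : sin a <> 0.
Proof.
  pose proof PI_RGT_0 as Hpi; pose proof INR_k_neq0 as Hk0.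
  assert (Hk3 : 3 <= INR k) by (replace 3 with (INR 3) by (simpl; ring); apply le_INR; lia).
  assert (Ha : a * INR k = 2 * PI) by (unfold a; field; assumption).
  apply Rgt_not_eq, sin_gt_0.
  - unfold a; apply Rdiv_lt_0_compat; lra.
  - nra.
Qed.

(* Summation by parts around the closed polygon: the [j]-th term of the first sum and
   the [(j-1)]-th term of the second one share the factor [h (th j)]. *)
Lemma fsum_cross_periodic (psi : R -> R) : periodic_2pi psi ->
  fsum (fun j => h (th j) * psi (th (S j)) - h (th (S j)) * psi (th j)) 0 k =
  fsum (fun j => h (th j) * (psi (th j + a) - psi (th j - a))) 1 k.
Proof.
  intros Hpsi; rewrite fsum_minus.
  rewrite (fsum_ext (fun j => h (th j) * psi (th (S j))) (fun j => h (th j) * psi (th j + a)))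
    by (intros; rewrite theta_S; reflexivity).
  rewrite fsum_rotate
    by (rewrite theta_last, h_periodic, Rplus_assoc, (Rplus_comm (2 * PI)), <- Rplus_assoc, Hpsi;
        reflexivity).
  rewrite (fsum_ext (fun j => h (th (S j)) * psi (th j)) (fun j => h (th (S j)) * psi (th (S j) - a)))
    by (intros; rewrite theta_S; f_equal; f_equal; ring).
  rewrite (fsum_shift (fun j => h (th j) * psi (th j - a))), <- fsum_minus.
  apply fsum_ext; intros; ring.
Qed.

Variable v : nat -> pt.
Hypothesis v_vertex : forall j : nat, (j < k)%nat ->
  on_support_line h k s j (v j) /\ on_support_line h k s (S j) (v j).

Lemma vertex_cramer (j : nat) : (j < k)%nat ->
  sin a * fst (v j) = h (th j) * sin (th (S j)) - h (th (S j)) * sin (th j) /\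
  sin a * snd (v j) = h (th j) * - cos (th (S j)) - h (th (S j)) * - cos (th j).
Proof.
  intros Hj; destruct (v_vertex j Hj) as [Hl Hr].
  unfold on_support_line in Hl, Hr; fold th in Hl, Hr; rewrite theta_S in Hr |- *.
  destruct (support_lines_vertex _ _ _ _ _ Hl Hr) as [Hx Hy].
  split; [exact Hx | rewrite Hy; ring].
Qed.

Lemma fsum_vertex_fst :
  fsum (fun j => fst (v j)) 0 k = 2 * fsum (fun j => h (th j) * cos (th j)) 1 k.
Proof.
  apply (Rmult_eq_reg_l (sin a)); [|exact sin_step_neq0].
  rewrite <- fsum_scal.
  erewrite fsum_ext by (intros j Hj; apply (proj1 (vertex_cramer j ltac:(lia)))).
  rewrite fsum_cross_periodic by exact sin_periodic.
  rewrite <- !fsum_scal; apply fsum_ext; intros.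
  rewrite sin_plus, sin_minus; ring.
Qed.

Lemma fsum_vertex_snd :
  fsum (fun j => snd (v j)) 0 k = 2 * fsum (fun j => h (th j) * sin (th j)) 1 k.
Proof.
  apply (Rmult_eq_reg_l (sin a)); [|exact sin_step_neq0].
  rewrite <- fsum_scal.
  erewrite fsum_ext by (intros j Hj; apply (proj2 (vertex_cramer j ltac:(lia)))).
  rewrite (fsum_cross_periodic (fun x => - cos x)) by exact opp_cos_periodic.
  rewrite <- !fsum_scal; apply fsum_ext; intros.
  rewrite cos_plus, cos_minus; ring.
Qed.

End EquiangularPolygon.

Theorem proposition4p5 (h : R -> R) (k : nat)
  (Hsmooth : smooth h) (Hper : periodic_2pi h) (Hk : (2 < k)%nat)
  (s : R) (v : nat -> pt)
  (Hv : forall j : nat, (j < k)%nat ->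
        on_support_line h k s j (v j) /\ on_support_line h k s (S j) (v j)) :
  center_of_mass k v = midpoint_param h k s.
Proof.
  unfold center_of_mass, midpoint_param.
  rewrite (fsum_vertex_fst h k s Hper Hk v Hv), (fsum_vertex_snd h k s Hper Hk v Hv).
  unfold Rdiv; f_equal; ring.
Qed.
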